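(* For all $\lambda>0$ and all $0<x<\pi/2$, \[ \left|\int_0^x \frac{e^{it\lambda}}{\cos t}\,dt-\frac{i}{\lambda}\right|<\frac{1}{\lambda}-M(\lambda)+M(\lambda\cos x). \]
   Context: For $t>0$, $M(t)=\int_0^\infty \frac{e^{-tu}}{\sqrt{u^2+1}}\,du$. *)

From Stdlib Require Import Reals.
From Coquelicot Require Import Coquelicot.
Open Scope R_scope.

Definition M (t : R) : R :=
  RInt_gen (fun u => exp (- t * u) / sqrt (u ^ 2 + 1)) (at_point 0) (Rbar_locally p_infty).

Definition cexpi (theta : R) : C := (cos theta, sin theta).

Definition J (lam x : R) : C :=
  RInt (V := C_R_CompleteNormedModule) (fun t => scal (/ cos t) (cexpi (t * lam))) 0 x.

(* Let f z = e^(i lam z) / cos z, holomorphic on the strip |Re z| < pi/2.  Cauchy's theorem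
   on the rectangle with corners 0, x, x + iY, iY gives
     J lam x = int_0^x f (t + iY) dt + i int_0^Y f (iy) dy - i int_0^Y f (x + iy) dy.
   On the imaginary axis f (iy) = e^(-lam y) / cosh y is real with integral I <= 1/lam, so
   |J lam x - i/lam| <= |top edge| + (1/lam - I) + |right edge|.  On the right edge
   |f (x + iy)| = e^(-lam y) / sqrt (cos^2 x + sinh^2 y); as sinh y >= y and
   s |-> 1/sqrt (s^2 + c^2) - 1/sqrt (s^2 + 1) decreases, this is at most
   e^(-lam y) / cosh y + e^(-lam y) (1/sqrt (y^2 + c^2) - 1/sqrt (y^2 + 1)) with c = cos x.
   The first term integrates to I, the second over [0, oo) to M (lam c) - M lam (substitute
   y = c u).  The top edge is at most x e^(-lam Y) / sinh Y, which for Y large is smaller than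
   the integral of the second, positive, term over [Y, Y + 1]: hence the strict inequality. *)

From Stdlib Require Import Reals Lra.
From Coquelicot Require Import Coquelicot.
Open Scope R_scope.

Local Notation CInt := (@RInt C_R_CompleteNormedModule).

Lemma RInt_C_parts (f : R -> C) a b :
  ex_RInt (fun t => fst (f t)) a b -> ex_RInt (fun t => snd (f t)) a b ->
  CInt f a b = (RInt (fun t => fst (f t)) a b, RInt (fun t => snd (f t)) a b).
Proof.
  intros Hre Him. apply is_RInt_unique.
  apply (is_RInt_fct_extend_pair (U := R_NormedModule) (V := R_NormedModule));
    apply (RInt_correct (V := R_CompleteNormedModule)); assumption.
Qed.

Lemma Cmod_RInt_le (f : R -> C) (g : R -> R) a b : a <= b ->
  ex_RInt (fun t => fst (f t)) a b -> ex_RInt (fun t => snd (f t)) a b -> ex_RInt g a b ->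
  (forall t, a <= t <= b -> Cmod (f t) <= g t) -> Cmod (CInt f a b) <= RInt g a b.
Proof.
  intros Hab Hre Him Hg Hfg. rewrite Cmod_norm.
  apply (norm_RInt_le (V := C_R_NormedModule) f g a b).
  - exact Hab.
  - intros t Ht. rewrite <- Cmod_norm. now apply Hfg.
  - rewrite RInt_C_parts by assumption.
    apply (is_RInt_fct_extend_pair (U := R_NormedModule) (V := R_NormedModule));
      apply (RInt_correct (V := R_CompleteNormedModule)); assumption.
  - now apply (RInt_correct (V := R_CompleteNormedModule)).
Qed.

Lemma CInt_RtoC (f : R -> R) a b : ex_RInt f a b ->
  CInt (fun y => RtoC (f y)) a b = RtoC (RInt f a b).
Proof.
  intros Hf. unfold RtoC.
  rewrite RInt_C_parts; cbn [fst snd]; [| exact Hf | apply ex_RInt_const].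
  rewrite RInt_const. unfold scal; simpl. unfold mult; simpl. f_equal. ring.
Qed.

(** * Cauchy's theorem on a rectangle *)

Lemma continuous_of_continuity_2d_l (f : R -> R -> R) x y :
  continuity_2d_pt f x y -> continuous (fun u => f u y) x.
Proof.
  intros Hf P [eps HP]. destruct (Hf eps) as [d Hd].
  exists d. intros u Hu. apply HP. apply Hd; [exact Hu|].
  rewrite Rminus_eq_0, Rabs_R0. apply cond_pos.
Qed.

Lemma continuous_of_continuity_2d_r (f : R -> R -> R) x y :
  continuity_2d_pt f x y -> continuous (fun v => f x v) y.
Proof.
  intros Hf P [eps HP]. destruct (Hf eps) as [d Hd].
  exists d. intros v Hv. apply HP. apply Hd; [|exact Hv].
  rewrite Rminus_eq_0, Rabs_R0. apply cond_pos.
Qed.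

Section Strip.

Variables alpha beta : R.

Lemma strip_locally X : alpha < X < beta -> locally X (fun u => alpha < u < beta).
Proof. intros HX. apply (locally_interval _ X alpha beta); simpl; tauto. Qed.

Lemma strip_locally_2d (P : R -> R -> Prop) X y : alpha < X < beta ->
  (forall u v, alpha < u < beta -> P u v) -> locally_2d P X y.
Proof.
  intros HX HP.
  assert (Hd : 0 < Rmin (X - alpha) (beta - X)) by (apply Rmin_glb_lt; lra).
  exists (mkposreal _ Hd). intros u v Hu _. apply HP. simpl in Hu.
  apply Rabs_def2 in Hu. pose proof (Rmin_l (X - alpha) (beta - X)).
  pose proof (Rmin_r (X - alpha) (beta - X)). lra.
Qed.

Lemma strip_between a b z : alpha < a < beta -> alpha < b < beta ->
  Rmin a b <= z <= Rmax a b -> alpha < z < beta.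
Proof. unfold Rmin, Rmax. destruct (Rle_dec a b); lra. Qed.

Lemma ex_RInt_horizontal (f : R -> R -> R) y a b :
  (forall t, alpha < t < beta -> continuity_2d_pt f t y) ->
  alpha < a < beta -> alpha < b < beta -> ex_RInt (fun t => f t y) a b.
Proof.
  intros Hf Ha Hb. apply (ex_RInt_continuous (V := R_CompleteNormedModule)). intros z Hz.
  apply continuous_of_continuity_2d_l, Hf, (strip_between a b); auto.
Qed.

Lemma ex_RInt_vertical (f : R -> R -> R) t c d :
  (forall y, continuity_2d_pt f t y) -> ex_RInt (fun y => f t y) c d.
Proof.
  intros Hf. apply (ex_RInt_continuous (V := R_CompleteNormedModule)). intros z _.
  apply continuous_of_continuity_2d_r, Hf.
Qed.

Section ClosedForm.

(* Green's theorem for the closed form [A dt - B dy], i.e. [d_t B = D = - d_y A]. *)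

Variables A B D : R -> R -> R.
Hypothesis B_derive : forall t y, alpha < t < beta -> is_derive (fun u => B u y) t (D t y).
Hypothesis A_derive : forall t y, alpha < t < beta -> is_derive (fun v => A t v) y (- D t y).
Hypothesis D_cont : forall t y, alpha < t < beta -> continuity_2d_pt D t y.
Hypothesis A_cont : forall t y, alpha < t < beta -> continuity_2d_pt A t y.
Hypothesis B_cont : forall t y, alpha < t < beta -> continuity_2d_pt B t y.

Lemma RInt_vertical_D X c d : alpha < X < beta ->
  RInt (fun y => D X y) c d = A X c - A X d.
Proof.
  intros HX. apply is_RInt_unique.
  replace (A X c - A X d) with (minus (- A X d) (- A X c))
    by (unfold minus, plus, opp; simpl; ring).
  apply (is_RInt_derive (fun v => - A X v)).
  - intros y _. rewrite <- (Ropp_involutive (D X y)).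
    apply (is_derive_opp (fun v => A X v)), A_derive, HX.
  - intros y _. apply continuous_of_continuity_2d_r, D_cont, HX.
Qed.

Lemma is_derive_RInt_vertical X c d : alpha < X < beta ->
  is_derive (fun u => RInt (fun y => B u y) c d) X (A X c - A X d).
Proof.
  intros HX. rewrite <- RInt_vertical_D by exact HX.
  rewrite (RInt_ext (fun y => D X y) (fun y => Derive (fun u => B u y) X))
    by (intros y _; symmetry; apply is_derive_unique, B_derive, HX).
  apply is_derive_RInt_param.
  - apply (filter_imp (fun u => alpha < u < beta)); [|now apply strip_locally].
    intros u Hu y _. exists (D u y). apply B_derive, Hu.
  - intros y _. apply continuity_2d_pt_ext_loc with D; [|now apply D_cont].
    apply strip_locally_2d; [exact HX|].
    intros u v Hu. symmetry. apply is_derive_unique, B_derive, Hu.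
  - apply (filter_imp (fun u => alpha < u < beta)); [|now apply strip_locally].
    intros u Hu. apply ex_RInt_vertical. intros y; apply B_cont, Hu.
Qed.

Lemma is_derive_RInt_horizontal a X d : alpha < a < beta -> alpha < X < beta ->
  is_derive (fun u => RInt (fun t => A t d) a u) X (A X d).
Proof.
  intros Ha HX. apply (is_derive_RInt (fun t => A t d) _ a).
  - apply (filter_imp (fun u => alpha < u < beta)); [|now apply strip_locally].
    intros u Hu. apply (RInt_correct (V := R_CompleteNormedModule)).
    apply ex_RInt_horizontal; auto.
  - apply continuous_of_continuity_2d_l, A_cont, HX.
Qed.

Lemma RInt_rectangle_closed_form a b c d : alpha < a < beta -> alpha < b < beta ->
  RInt (fun t => A t c) a b - RInt (fun t => A t d) a b =
  RInt (fun y => B b y) c d - RInt (fun y => B a y) c d.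
Proof.
  intros Ha Hb.
  set (G X := RInt (fun y => B X y) c d + RInt (fun t => A t d) a X).
  assert (HG : is_RInt (fun t => A t c) a b (minus (G b) (G a))).
  { apply (is_RInt_derive G).
    - intros X HX. pose proof (strip_between a b X Ha Hb HX) as HX'.
      replace (A X c) with ((A X c - A X d) + A X d) by ring.
      apply (is_derive_plus (fun u => RInt (fun y => B u y) c d)).
      + now apply is_derive_RInt_vertical.
      + now apply is_derive_RInt_horizontal.
    - intros X HX. apply continuous_of_continuity_2d_l, A_cont.
      exact (strip_between a b X Ha Hb HX). }
  rewrite (is_RInt_unique _ _ _ _ HG). unfold G, minus, plus, opp; simpl.
  rewrite RInt_point. unfold zero; simpl. ring.
Qed.

End ClosedForm.

Section Holomorphic.

(* Cauchy-Riemann equations: [dF] is the complex derivative of [F],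
   i.e. [d_t F = dF] and [d_y F = i dF]. *)
Variables F dF : R -> R -> C.
Hypothesis F_re_derive_t : forall t y, alpha < t < beta ->
  is_derive (fun u => fst (F u y)) t (fst (dF t y)).
Hypothesis F_im_derive_t : forall t y, alpha < t < beta ->
  is_derive (fun u => snd (F u y)) t (snd (dF t y)).
Hypothesis F_re_derive_y : forall t y, alpha < t < beta ->
  is_derive (fun v => fst (F t v)) y (- snd (dF t y)).
Hypothesis F_im_derive_y : forall t y, alpha < t < beta ->
  is_derive (fun v => snd (F t v)) y (fst (dF t y)).
Hypothesis F_re_cont : forall t y, alpha < t < beta ->
  continuity_2d_pt (fun u v => fst (F u v)) t y.
Hypothesis F_im_cont : forall t y, alpha < t < beta ->
  continuity_2d_pt (fun u v => snd (F u v)) t y.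
Hypothesis dF_re_cont : forall t y, alpha < t < beta ->
  continuity_2d_pt (fun u v => fst (dF u v)) t y.
Hypothesis dF_im_cont : forall t y, alpha < t < beta ->
  continuity_2d_pt (fun u v => snd (dF u v)) t y.

Lemma RInt_rectangle_re a b c d : alpha < a < beta -> alpha < b < beta ->
  RInt (fun t => fst (F t c)) a b - RInt (fun t => fst (F t d)) a b =
  RInt (fun y => snd (F b y)) c d - RInt (fun y => snd (F a y)) c d.
Proof.
  exact (RInt_rectangle_closed_form (fun t y => fst (F t y)) (fun t y => snd (F t y))
    (fun t y => snd (dF t y)) F_im_derive_t F_re_derive_y dF_im_cont F_re_cont F_im_cont a b c d).
Qed.

Lemma RInt_rectangle_im a b c d : alpha < a < beta -> alpha < b < beta ->
  RInt (fun t => snd (F t c)) a b - RInt (fun t => snd (F t d)) a b =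
  RInt (fun y => fst (F a y)) c d - RInt (fun y => fst (F b y)) c d.
Proof.
  intros Ha Hb.
  assert (Hneg_re_t : forall t y, alpha < t < beta ->
    is_derive (fun u => - fst (F u y)) t (- fst (dF t y))).
  { intros t y Ht. apply (is_derive_opp (fun u => fst (F u y))), F_re_derive_t, Ht. }
  assert (Him_y : forall t y, alpha < t < beta ->
    is_derive (fun v => snd (F t v)) y (- - fst (dF t y))).
  { intros t y Ht. rewrite Ropp_involutive. apply F_im_derive_y, Ht. }
  assert (Hneg_dF_re : forall t y, alpha < t < beta ->
    continuity_2d_pt (fun u v => - fst (dF u v)) t y).
  { intros t y Ht. apply continuity_2d_pt_opp, dF_re_cont, Ht. }
  assert (Hneg_F_re : forall t y, alpha < t < beta ->
    continuity_2d_pt (fun u v => - fst (F u v)) t y).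
  { intros t y Ht. apply continuity_2d_pt_opp, F_re_cont, Ht. }
  assert (Hopp : forall t, alpha < t < beta ->
    RInt (fun y => - fst (F t y)) c d = - RInt (fun y => fst (F t y)) c d).
  { intros t Ht. exact (RInt_opp (V := R_CompleteNormedModule) (fun y => fst (F t y)) c d
      (ex_RInt_vertical _ t c d (fun y => F_re_cont t y Ht))). }
  assert (H := RInt_rectangle_closed_form (fun t y => snd (F t y)) (fun t y => - fst (F t y))
    (fun t y => - fst (dF t y)) Hneg_re_t Him_y Hneg_dF_re F_im_cont Hneg_F_re a b c d Ha Hb).
  cbv beta in H. rewrite (Hopp a Ha), (Hopp b Hb) in H. lra.
Qed.

Lemma RInt_rectangle_holomorphic a b c d : alpha < a < beta -> alpha < b < beta ->
  CInt (fun t => F t c) a b =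
  (CInt (fun t => F t d) a b + Ci * (CInt (fun y => F a y) c d - CInt (fun y => F b y) c d))%C.
Proof.
  intros Ha Hb.
  assert (Hh : forall y,
    ex_RInt (fun t => fst (F t y)) a b /\ ex_RInt (fun t => snd (F t y)) a b).
  { intros y. split.
    - apply (ex_RInt_horizontal (fun u v => fst (F u v))); [| exact Ha | exact Hb].
      intros t Ht. apply F_re_cont, Ht.
    - apply (ex_RInt_horizontal (fun u v => snd (F u v))); [| exact Ha | exact Hb].
      intros t Ht. apply F_im_cont, Ht. }
  assert (Hv : forall t, alpha < t < beta ->
    ex_RInt (fun y => fst (F t y)) c d /\ ex_RInt (fun y => snd (F t y)) c d).
  { intros t Ht. split.
    - apply (ex_RInt_vertical (fun u v => fst (F u v))). intros y. apply F_re_cont, Ht.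
    - apply (ex_RInt_vertical (fun u v => snd (F u v))). intros y. apply F_im_cont, Ht. }
  rewrite (RInt_C_parts (fun t => F t c) a b (proj1 (Hh c)) (proj2 (Hh c))),
    (RInt_C_parts (fun t => F t d) a b (proj1 (Hh d)) (proj2 (Hh d))),
    (RInt_C_parts (fun y => F a y) c d (proj1 (Hv a Ha)) (proj2 (Hv a Ha))),
    (RInt_C_parts (fun y => F b y) c d (proj1 (Hv b Hb)) (proj2 (Hv b Hb))).
  pose proof (RInt_rectangle_re a b c d Ha Hb).
  pose proof (RInt_rectangle_im a b c d Ha Hb).
  unfold Cminus, Copp, Cplus, Cmult, Ci; cbn [fst snd]. f_equal; lra.
Qed.

End Holomorphic.
End Strip.

Lemma cosh_sqr y : cosh y ^ 2 = 1 + sinh y ^ 2.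
Proof. unfold cosh, sinh. rewrite exp_Ropp. pose proof (exp_pos y). field. lra. Qed.

Lemma cosh_ge_1 y : 1 <= cosh y.
Proof.
  unfold cosh. rewrite exp_Ropp. pose proof (exp_pos y).
  assert (0 <= (exp y - 1) ^ 2 / exp y)
    by (unfold Rdiv; apply Rmult_le_pos;
        [apply pow2_ge_0 | left; apply Rinv_0_lt_compat, exp_pos]).
  replace ((exp y + / exp y) / 2) with (1 + (exp y - 1) ^ 2 / exp y / 2)
    by (field; apply Rgt_not_eq, exp_pos).
  lra.
Qed.

Lemma sqrt_sinh_sqr_add_1 y : sqrt (sinh y ^ 2 + 1) = cosh y.
Proof.
  rewrite <- (sqrt_pow2 (cosh y)) by (pose proof (cosh_ge_1 y); lra).
  f_equal. rewrite cosh_sqr. ring.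
Qed.

Lemma sinh_pos y : 0 < y -> 0 < sinh y.
Proof. intros Hy. rewrite <- sinh_0. now apply sinh_lt. Qed.

Lemma sinh_ge_id y : 0 <= y -> y <= sinh y.
Proof.
  intros Hy.
  assert (H : is_RInt (fun u => cosh u - 1) 0 y (minus (sinh y - y) (sinh 0 - 0))).
  { apply (is_RInt_derive (fun u => sinh u - u)).
    - intros u _. unfold sinh, cosh. auto_derive; [exact I | field].
    - intros u _. apply (ex_derive_continuous (fun u => cosh u - 1)).
      unfold cosh. auto_derive. exact I. }
  assert (0 <= RInt (fun u => cosh u - 1) 0 y).
  { apply RInt_ge_0; [exact Hy | eexists; exact H |].
    intros u _. pose proof (cosh_ge_1 u). lra. }
  rewrite (is_RInt_unique _ _ _ _ H), sinh_0 in *.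
  unfold minus, plus, opp in *; simpl in *. lra.
Qed.

Lemma sinh_gt_quartic y : 0 < y -> ((y / 4) ^ 4 - 1) / 2 < sinh y.
Proof.
  intros Hy.
  assert (Hq : exp y = exp (y / 4) ^ 4).
  { replace y with (y / 4 + y / 4 + y / 4 + y / 4) at 1 by field.
    rewrite !exp_plus. ring. }
  assert (H1 : y / 4 < exp (y / 4)) by (pose proof (exp_ineq1 (y / 4)); lra).
  assert (H2 : exp (- y) < 1) by (rewrite <- exp_0; apply exp_increasing; lra).
  assert (H3 : (y / 4) ^ 4 < exp (y / 4) ^ 4).
  { assert (y / 4 * (y / 4) < exp (y / 4) * exp (y / 4)) by nra.
    replace ((y / 4) ^ 4) with (y / 4 * (y / 4) * (y / 4 * (y / 4))) by ring.
    replace (exp (y / 4) ^ 4) with (exp (y / 4) * exp (y / 4) * (exp (y / 4) * exp (y / 4)))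
      by ring.
    nra. }
  unfold sinh. lra.
Qed.

Lemma sinh_dominates_cubic K : 0 < K -> exists y, 0 < y /\ K * (y + 2) ^ 3 < sinh y.
Proof.
  intros HK.
  (* For [y = 4096 K + 8 >= 8]: [K (y + 2)^3 <= (y - 8) y^3 / 512 < ((y / 4)^4 - 1) / 2]. *)
  exists (4096 * K + 8). split; [lra|].
  set (y := 4096 * K + 8).
  apply Rle_lt_trans with (((y / 4) ^ 4 - 1) / 2); [| apply sinh_gt_quartic; unfold y; lra].
  replace K with ((y - 8) / 4096) by (unfold y; field).
  assert (H1 : (y + 2) ^ 3 <= (2 * y) ^ 3) by (apply pow_incr; unfold y; split; lra).
  assert (H2 : 8 ^ 3 <= y ^ 3) by (apply pow_incr; unfold y; split; lra).
  assert (H3 : (y - 8) * (y + 2) ^ 3 <= (y - 8) * (2 * y) ^ 3)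
    by (apply Rmult_le_compat_l; [unfold y; lra | exact H1]).
  nra.
Qed.

(** * The function [z |-> e^(i lam z) / cos z] *)

(* Functions of z = t + iy as (real part, imaginary part): [ccos t y] = cos z,
   [csin t y] = sin z, [cexpiz lam t y] = e^(i lam z); [expi_sec_deriv lam] is the complex
   derivative f (i lam + tan z) of f = [expi_sec lam]. *)
Definition ccos (t y : R) : C := (cos t * cosh y, - (sin t * sinh y)).
Definition csin (t y : R) : C := (sin t * cosh y, cos t * sinh y).
Definition cexpiz (lam t y : R) : C :=
  (exp (- lam * y) * cos (lam * t), exp (- lam * y) * sin (lam * t)).

Definition expi_sec (lam t y : R) : C := (cexpiz lam t y / ccos t y)%C.
Definition expi_sec_deriv (lam t y : R) : C :=
  (expi_sec lam t y * (Ci * RtoC lam + csin t y / ccos t y))%C.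

Lemma ccos_norm_sqr t y : fst (ccos t y) ^ 2 + snd (ccos t y) ^ 2 = cos t ^ 2 + sinh y ^ 2.
Proof.
  simpl. pose proof (sin2_cos2 t). pose proof (cosh_sqr y). unfold Rsqr in *. nra.
Qed.

Lemma ccos_norm_sqr_neq_0 t y : cos t <> 0 -> fst (ccos t y) ^ 2 + snd (ccos t y) ^ 2 <> 0.
Proof.
  intros Ht. rewrite ccos_norm_sqr. apply Rgt_not_eq.
  pose proof (pow2_gt_0 _ Ht). pose proof (pow2_ge_0 (sinh y)). lra.
Qed.

Lemma ccos_neq_0 t y : cos t <> 0 -> ccos t y <> 0%C.
Proof.
  intros Ht E. apply (ccos_norm_sqr_neq_0 t y Ht). rewrite E. simpl. ring.
Qed.

Lemma Cmod_expi_sec lam t y : cos t <> 0 ->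
  Cmod (expi_sec lam t y) = exp (- lam * y) / sqrt (cos t ^ 2 + sinh y ^ 2).
Proof.
  intros Ht. unfold expi_sec. rewrite Cmod_div by now apply ccos_neq_0.
  unfold Cmod at 2. rewrite ccos_norm_sqr. f_equal.
  unfold Cmod, cexpiz; cbn [fst snd].
  replace ((exp (- lam * y) * cos (lam * t)) ^ 2 + (exp (- lam * y) * sin (lam * t)) ^ 2)
    with (exp (- lam * y) ^ 2 * (Rsqr (sin (lam * t)) + Rsqr (cos (lam * t))))
    by (unfold Rsqr; ring).
  rewrite sin2_cos2, Rmult_1_r. apply sqrt_pow2. left. apply exp_pos.
Qed.

Lemma expi_sec_real_axis lam t : cos t <> 0 ->
  expi_sec lam t 0 = scal (/ cos t) (cexpi (t * lam)).
Proof.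
  intros Ht. unfold expi_sec, cexpiz, ccos, cexpi, Cdiv, Cmult, Cinv.
  rewrite cosh_0, sinh_0, Rmult_0_r, exp_0, (Rmult_comm lam t).
  unfold scal; simpl. unfold prod_scal, scal; simpl. unfold mult; simpl.
  f_equal; field; exact Ht.
Qed.

Lemma expi_sec_imag_axis lam y : expi_sec lam 0 y = RtoC (exp (- lam * y) / cosh y).
Proof.
  pose proof (cosh_ge_1 y).
  unfold expi_sec, cexpiz, ccos, Cdiv, Cmult, Cinv, RtoC.
  rewrite Rmult_0_r, cos_0, sin_0. simpl. f_equal; field; lra.
Qed.

Lemma continuity_pt_exp x : continuity_pt exp x.
Proof. apply derivable_continuous_pt, derivable_pt_exp. Qed.

Ltac unfold_expi_sec :=
  unfold expi_sec_deriv, expi_sec, cexpiz, ccos, csin, Cdiv, Cmult, Cinv, Cplus, Ci, RtoC,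
    cosh, sinh in *; cbn [fst snd] in *.

(* After unfolding, both sides are rational in [cos], [sin] and [exp], and the only
   non-constant denominator is |cos z|^2. *)
Ltac solve_expi_sec_derive ccos_neq :=
  pose proof ccos_neq as HD; unfold_expi_sec;
  auto_derive;
  [ repeat split; let E := fresh in intro E; apply HD; lra
  | unfold Rminus, Rdiv; simpl; field; let E := fresh in intro E; apply HD; lra ].

Ltac solve_expi_sec_continuity ccos_neq :=
  pose proof ccos_neq as HD; unfold_expi_sec; unfold Rminus, Rdiv; simpl;
  repeat first
    [ apply continuity_2d_pt_const
    | apply continuity_2d_pt_id1 | apply continuity_2d_pt_id2
    | apply continuity_2d_pt_plus | apply continuity_2d_pt_mult | apply continuity_2d_pt_opp
    | apply continuity_2d_pt_inv; [| let E := fresh in intro E; apply HD; lra]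
    | apply continuity_1d_2d_pt_comp; [apply continuity_cos |]
    | apply continuity_1d_2d_pt_comp; [apply continuity_sin |]
    | apply continuity_1d_2d_pt_comp; [apply continuity_pt_exp |] ].

Section ExpiSec.

Variables (lam t y : R).
Hypothesis Ht : cos t <> 0.

Lemma expi_sec_re_derive_t :
  is_derive (fun u => fst (expi_sec lam u y)) t (fst (expi_sec_deriv lam t y)).
Proof. solve_expi_sec_derive (ccos_norm_sqr_neq_0 t y Ht). Qed.

Lemma expi_sec_im_derive_t :
  is_derive (fun u => snd (expi_sec lam u y)) t (snd (expi_sec_deriv lam t y)).
Proof. solve_expi_sec_derive (ccos_norm_sqr_neq_0 t y Ht). Qed.

Lemma expi_sec_re_derive_y :
  is_derive (fun v => fst (expi_sec lam t v)) y (- snd (expi_sec_deriv lam t y)).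
Proof. solve_expi_sec_derive (ccos_norm_sqr_neq_0 t y Ht). Qed.

Lemma expi_sec_im_derive_y :
  is_derive (fun v => snd (expi_sec lam t v)) y (fst (expi_sec_deriv lam t y)).
Proof. solve_expi_sec_derive (ccos_norm_sqr_neq_0 t y Ht). Qed.

Lemma expi_sec_re_continuity : continuity_2d_pt (fun u v => fst (expi_sec lam u v)) t y.
Proof. solve_expi_sec_continuity (ccos_norm_sqr_neq_0 t y Ht). Qed.

Lemma expi_sec_im_continuity : continuity_2d_pt (fun u v => snd (expi_sec lam u v)) t y.
Proof. solve_expi_sec_continuity (ccos_norm_sqr_neq_0 t y Ht). Qed.

Lemma expi_sec_deriv_re_continuity :
  continuity_2d_pt (fun u v => fst (expi_sec_deriv lam u v)) t y.
Proof. solve_expi_sec_continuity (ccos_norm_sqr_neq_0 t y Ht). Qed.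

Lemma expi_sec_deriv_im_continuity :
  continuity_2d_pt (fun u v => snd (expi_sec_deriv lam u v)) t y.
Proof. solve_expi_sec_continuity (ccos_norm_sqr_neq_0 t y Ht). Qed.

End ExpiSec.

Lemma cos_neq_0_strip t : - (PI / 2) < t < PI / 2 -> cos t <> 0.
Proof. intros Ht. apply Rgt_not_eq, cos_gt_0; lra. Qed.

Lemma ex_RInt_expi_sec_horizontal lam y a b :
  - (PI / 2) < a < PI / 2 -> - (PI / 2) < b < PI / 2 ->
  ex_RInt (fun t => fst (expi_sec lam t y)) a b /\ ex_RInt (fun t => snd (expi_sec lam t y)) a b.
Proof.
  intros Ha Hb. split.
  - apply (ex_RInt_horizontal (- (PI / 2)) (PI / 2) (fun u v => fst (expi_sec lam u v)));
      [| exact Ha | exact Hb].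
    intros t Ht. apply expi_sec_re_continuity, cos_neq_0_strip, Ht.
  - apply (ex_RInt_horizontal (- (PI / 2)) (PI / 2) (fun u v => snd (expi_sec lam u v)));
      [| exact Ha | exact Hb].
    intros t Ht. apply expi_sec_im_continuity, cos_neq_0_strip, Ht.
Qed.

Lemma ex_RInt_expi_sec_vertical lam t c d : cos t <> 0 ->
  ex_RInt (fun y => fst (expi_sec lam t y)) c d /\ ex_RInt (fun y => snd (expi_sec lam t y)) c d.
Proof.
  intros Ht. split.
  - apply (ex_RInt_vertical (fun u v => fst (expi_sec lam u v))).
    intros y. apply expi_sec_re_continuity, Ht.
  - apply (ex_RInt_vertical (fun u v => snd (expi_sec lam u v))).
    intros y. apply expi_sec_im_continuity, Ht.
Qed.

Lemma ex_RInt_exp_div_cosh lam a b : ex_RInt (fun y => exp (- lam * y) / cosh y) a b.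
Proof.
  apply (ex_RInt_continuous (V := R_CompleteNormedModule)). intros y _.
  apply (ex_derive_continuous (fun y => exp (- lam * y) / cosh y)).
  unfold cosh. auto_derive. pose proof (cosh_ge_1 y). unfold cosh in *. lra.
Qed.

Definition imag_axis_integral (lam Y : R) : R := RInt (fun y => exp (- lam * y) / cosh y) 0 Y.

Lemma J_contour lam x Y : 0 <= x < PI / 2 ->
  J lam x = (CInt (fun t => expi_sec lam t Y) 0 x
    + Ci * (RtoC (imag_axis_integral lam Y) - CInt (fun y => expi_sec lam x y) 0 Y))%C.
Proof.
  intros Hx. unfold J.
  rewrite (RInt_ext (V := C_R_CompleteNormedModule) _ (fun t => expi_sec lam t 0)).
  2:{ intros t Ht. rewrite Rmin_left, Rmax_right in Ht by lra.
      symmetry. apply expi_sec_real_axis, cos_neq_0_strip. lra. }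
  rewrite (RInt_rectangle_holomorphic (- (PI / 2)) (PI / 2) (expi_sec lam) (expi_sec_deriv lam)
    (fun t y Ht => expi_sec_re_derive_t lam t y (cos_neq_0_strip t Ht))
    (fun t y Ht => expi_sec_im_derive_t lam t y (cos_neq_0_strip t Ht))
    (fun t y Ht => expi_sec_re_derive_y lam t y (cos_neq_0_strip t Ht))
    (fun t y Ht => expi_sec_im_derive_y lam t y (cos_neq_0_strip t Ht))
    (fun t y Ht => expi_sec_re_continuity lam t y (cos_neq_0_strip t Ht))
    (fun t y Ht => expi_sec_im_continuity lam t y (cos_neq_0_strip t Ht))
    (fun t y Ht => expi_sec_deriv_re_continuity lam t y (cos_neq_0_strip t Ht))
    (fun t y Ht => expi_sec_deriv_im_continuity lam t y (cos_neq_0_strip t Ht))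
    0 x 0 Y) by lra.
  rewrite (RInt_ext (V := C_R_CompleteNormedModule) (fun y => expi_sec lam 0 y)
    (fun y => RtoC (exp (- lam * y) / cosh y)%R))
    by (intros y _; apply expi_sec_imag_axis).
  rewrite CInt_RtoC by apply ex_RInt_exp_div_cosh. reflexivity.
Qed.

(** * The function [M] *)

Definition M_integrand (t u : R) : R := exp (- t * u) / sqrt (u ^ 2 + 1).

Lemma sqrt_sqr_add_1_ge_1 u : 1 <= sqrt (u ^ 2 + 1).
Proof. rewrite <- sqrt_1 at 1. apply sqrt_le_1_alt. pose proof (pow2_ge_0 u). lra. Qed.

Lemma ex_RInt_M_integrand t a b : ex_RInt (M_integrand t) a b.
Proof.
  apply (ex_RInt_continuous (V := R_CompleteNormedModule)). intros u _.
  apply (ex_derive_continuous (M_integrand t)). unfold M_integrand. auto_derive.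
  repeat split; [nra | apply Rgt_not_eq, sqrt_lt_R0; nra].
Qed.

Lemma M_integrand_bounds t u : 0 <= M_integrand t u <= exp (- t * u).
Proof.
  unfold M_integrand, Rdiv. pose proof (sqrt_sqr_add_1_ge_1 u). pose proof (exp_pos (- t * u)).
  assert (0 < / sqrt (u ^ 2 + 1) <= 1).
  { split; [apply Rinv_0_lt_compat; lra |].
    apply (Rmult_le_reg_l (sqrt (u ^ 2 + 1))); [lra |].
    rewrite Rinv_r by (apply Rgt_not_eq; lra). lra. }
  split; nra.
Qed.

Lemma is_RInt_exp_neg t u v : t <> 0 ->
  is_RInt (fun s => exp (- t * s)) u v ((exp (- t * u) - exp (- t * v)) / t).
Proof.
  intros Ht.
  replace ((exp (- t * u) - exp (- t * v)) / t)
    with (minus (- exp (- t * v) / t) (- exp (- t * u) / t))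
    by (unfold minus, plus, opp; simpl; field; exact Ht).
  apply (is_RInt_derive (fun s => - exp (- t * s) / t)).
  - intros s _. auto_derive; [exact I | field; exact Ht].
  - intros s _. apply (ex_derive_continuous (fun s => exp (- t * s))). auto_derive. exact I.
Qed.

Lemma RInt_exp_neg_le t u v : 0 < t -> u <= v ->
  RInt (fun s => exp (- t * s)) u v <= exp (- t * u) / t.
Proof.
  intros Ht Huv. rewrite (is_RInt_unique _ _ _ _ (is_RInt_exp_neg t u v ltac:(lra))).
  unfold Rdiv. apply Rmult_le_compat_r; [left; apply Rinv_0_lt_compat, Ht |].
  pose proof (exp_pos (- t * v)). lra.
Qed.

Lemma RInt_M_integrand_increment t u v : 0 < t -> u <= v ->
  0 <= RInt (M_integrand t) 0 v - RInt (M_integrand t) 0 u <= exp (- t * u) / t.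
Proof.
  intros Ht Huv.
  assert (E : RInt (M_integrand t) 0 v - RInt (M_integrand t) 0 u = RInt (M_integrand t) u v).
  { rewrite <- (RInt_Chasles (M_integrand t) 0 u v) by apply ex_RInt_M_integrand.
    unfold plus; simpl. lra. }
  rewrite E. split.
  - apply RInt_ge_0; [exact Huv | apply ex_RInt_M_integrand |].
    intros s _. apply M_integrand_bounds.
  - apply Rle_trans with (RInt (fun s => exp (- t * s)) u v); [| now apply RInt_exp_neg_le].
    apply RInt_le; [exact Huv | apply ex_RInt_M_integrand | eexists; apply is_RInt_exp_neg; lra |].
    intros s _. apply M_integrand_bounds.
Qed.

Lemma exp_neg_lt_inv z : 0 < z -> exp (- z) < / z.
Proof.
  intros Hz. rewrite exp_Ropp. apply Rinv_lt_contravar; [apply Rmult_lt_0_compat, exp_pos; lra |].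
  pose proof (exp_ineq1 z). lra.
Qed.

Lemma exp_neg_div_lt t eps u : 0 < t -> 0 < eps -> / (t * t * eps) < u ->
  exp (- t * u) / t < eps.
Proof.
  intros Ht He Hu.
  assert (Htu : 0 < t * u).
  { apply Rmult_lt_0_compat; [exact Ht |].
    apply Rlt_trans with (2 := Hu), Rinv_0_lt_compat. repeat apply Rmult_lt_0_compat; lra. }
  assert (H1 : 1 < t * t * eps * u).
  { assert (Hpos : 0 < t * t * eps) by (repeat apply Rmult_lt_0_compat; lra).
    replace 1 with (t * t * eps * / (t * t * eps)) by (field; lra).
    now apply Rmult_lt_compat_l. }
  assert (H2 : / (t * u) < eps * t).
  { apply (Rmult_lt_reg_l (t * u)); [exact Htu |].
    rewrite Rinv_r by (apply Rgt_not_eq; exact Htu). nra. }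
  pose proof (exp_neg_lt_inv (t * u) Htu).
  rewrite Ropp_mult_distr_l_reverse. apply (Rmult_lt_reg_r t); [exact Ht |].
  unfold Rdiv. rewrite Rmult_assoc, Rinv_l, Rmult_1_r by (apply Rgt_not_eq; exact Ht). lra.
Qed.

Lemma ex_lim_RInt_M_integrand t : 0 < t ->
  exists L, filterlim (fun b => RInt (M_integrand t) 0 b) (Rbar_locally p_infty) (locally L).
Proof.
  intros Ht. apply (filterlim_locally_cauchy (F := Rbar_locally p_infty)).
  intros eps. pose proof (cond_pos eps) as He.
  set (B := / (t * t * eps)).
  assert (HB : 0 < B) by (apply Rinv_0_lt_compat; repeat apply Rmult_lt_0_compat; lra).
  assert (Htail : forall u, B < u -> exp (- t * u) / t < eps)
    by (intros u Hu; apply exp_neg_div_lt; [exact Ht | exact He | exact Hu]).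
  exists (fun b => B < b). split; [now exists B |].
  intros u v Hu Hv. change (Rabs (RInt (M_integrand t) 0 v - RInt (M_integrand t) 0 u) < eps).
  destruct (Rle_dec u v) as [Huv | Huv].
  - pose proof (RInt_M_integrand_increment t u v Ht Huv). pose proof (Htail u Hu).
    rewrite Rabs_right by lra. lra.
  - pose proof (RInt_M_integrand_increment t v u Ht ltac:(lra)). pose proof (Htail v Hv).
    rewrite Rabs_left1 by lra. lra.
Qed.

Lemma M_eq_lim t L :
  filterlim (fun b => RInt (M_integrand t) 0 b) (Rbar_locally p_infty) (locally L) -> M t = L.
Proof.
  intros Hl. apply is_RInt_gen_unique.
  intros P HP. apply Filter_prod with (fun a => a = 0) (fun b => P (RInt (M_integrand t) 0 b)).
  - reflexivity.
  - exact (Hl P HP).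
  - intros a b -> Hb. exists (RInt (M_integrand t) 0 b). split; [| exact Hb].
    apply (RInt_correct (V := R_CompleteNormedModule)), ex_RInt_M_integrand.
Qed.

Lemma RInt_M_integrand_cvg t : 0 < t ->
  is_lim (fun b => RInt (M_integrand t) 0 b) p_infty (M t).
Proof.
  intros Ht. destruct (ex_lim_RInt_M_integrand t Ht) as [L Hl].
  rewrite (M_eq_lim t L Hl). exact Hl.
Qed.

Lemma le_lim_of_eventually_le (f : R -> R) (K L B : R) :
  (forall b, B <= b -> K <= f b) -> is_lim f p_infty L -> K <= L.
Proof.
  intros HK Hl.
  apply (is_lim_le_loc (fun _ => K) f p_infty K L); [| apply is_lim_const | exact Hl].
  exists B. intros b Hb. apply HK. lra.
Qed.

Lemma RInt_M_integrand_le_M t b : 0 < t -> RInt (M_integrand t) 0 b <= M t.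
Proof.
  intros Ht. apply (le_lim_of_eventually_le (fun b => RInt (M_integrand t) 0 b) _ _ b);
    [| now apply RInt_M_integrand_cvg].
  intros b' Hb. pose proof (RInt_M_integrand_increment t b b' Ht Hb). lra.
Qed.

(** * Comparison of [M (lam c)] with [M lam] *)

Definition gap (c s : R) : R := / sqrt (s ^ 2 + c ^ 2) - / sqrt (s ^ 2 + 1).

Section Gap.

Variable c : R.
Hypotheses (Hc : 0 < c) (Hc1 : c ^ 2 <= 1).

Lemma gap_antitone y s : 0 <= y <= s -> gap c s <= gap c y.
Proof.
  intros Hys. unfold gap.
  assert (Hc2 : 0 < c ^ 2) by (apply pow_lt, Hc).
  set (p := sqrt (s ^ 2 + c ^ 2)). set (q := sqrt (s ^ 2 + 1)).
  set (p0 := sqrt (y ^ 2 + c ^ 2)). set (q0 := sqrt (y ^ 2 + 1)).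
  assert (Hp : 0 < p) by (apply sqrt_lt_R0; nra).
  assert (Hp0 : 0 < p0) by (apply sqrt_lt_R0; nra).
  assert (Hpp : p * p = s ^ 2 + c ^ 2) by (apply sqrt_sqrt; nra).
  assert (Hqq : q * q = s ^ 2 + 1) by (apply sqrt_sqrt; nra).
  assert (Hpp0 : p0 * p0 = y ^ 2 + c ^ 2) by (apply sqrt_sqrt; nra).
  assert (Hqq0 : q0 * q0 = y ^ 2 + 1) by (apply sqrt_sqrt; nra).
  assert (Hpq : p <= q) by (apply sqrt_le_1; nra).
  assert (Hp0q0 : p0 <= q0) by (apply sqrt_le_1; nra).
  assert (Hp0p : p0 <= p) by (apply sqrt_le_1; nra).
  assert (Hq0q : q0 <= q) by (apply sqrt_le_1; nra).
  (* [(q - p) (q + p) = 1 - c^2 = (q0 - p0) (q0 + p0)], so the larger sum has the smaller gap. *)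
  assert (Hd : q - p <= q0 - p0) by nra.
  replace (/ p - / q) with ((q - p) / (p * q)) by (field; lra).
  replace (/ p0 - / q0) with ((q0 - p0) / (p0 * q0)) by (field; lra).
  apply Rle_trans with ((q0 - p0) / (p * q)).
  - unfold Rdiv. apply Rmult_le_compat_r; [left; apply Rinv_0_lt_compat; nra | lra].
  - unfold Rdiv. apply Rmult_le_compat_l; [lra |]. apply Rinv_le_contravar; nra.
Qed.

Lemma gap_lower_bound s : 0 <= s -> (1 - c ^ 2) / (2 * (s + 1) ^ 3) <= gap c s.
Proof.
  intros Hs. unfold gap.
  assert (Hc2 : 0 < c ^ 2) by (apply pow_lt, Hc).
  set (p := sqrt (s ^ 2 + c ^ 2)). set (q := sqrt (s ^ 2 + 1)).
  assert (Hp : 0 < p) by (apply sqrt_lt_R0; nra).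
  assert (Hpp : p * p = s ^ 2 + c ^ 2) by (apply sqrt_sqrt; nra).
  assert (Hqq : q * q = s ^ 2 + 1) by (apply sqrt_sqrt; nra).
  assert (Hpq : p <= q) by (apply sqrt_le_1; nra).
  assert (Hq1 : q <= s + 1) by nra.
  replace (/ p - / q) with ((1 - c ^ 2) / (p * q * (p + q)))
    by (field_simplify_eq; [nra | repeat split; lra]).
  unfold Rdiv. apply Rmult_le_compat_l; [lra |].
  apply Rinv_le_contravar; [apply Rmult_lt_0_compat; nra |].
  assert (p * q <= (s + 1) * (s + 1)) by nra.
  replace (2 * (s + 1) ^ 3) with ((s + 1) * (s + 1) * (2 * (s + 1))) by ring.
  apply Rmult_le_compat; nra.
Qed.

Lemma gap_nonneg s : 0 <= s -> 0 <= gap c s.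
Proof.
  intros Hs. apply Rle_trans with (2 := gap_lower_bound s Hs).
  unfold Rdiv. apply Rmult_le_pos; [lra |].
  left. apply Rinv_0_lt_compat. apply Rmult_lt_0_compat; [lra | apply pow_lt; lra].
Qed.

Lemma inv_sqrt_sinh_le y : 0 <= y ->
  / sqrt (c ^ 2 + sinh y ^ 2) <= / cosh y + gap c y.
Proof.
  intros Hy. rewrite <- sqrt_sinh_sqr_add_1.
  pose proof (gap_antitone y (sinh y) (conj Hy (sinh_ge_id y Hy))).
  unfold gap in *. rewrite (Rplus_comm (c ^ 2)). lra.
Qed.

End Gap.

Definition Mdiff_integrand (lam c v : R) : R := exp (- lam * v) * gap c v.

Lemma ex_RInt_exp_div_sqrt lam c a b : 0 < c ->
  ex_RInt (fun v => exp (- lam * v) / sqrt (v ^ 2 + c ^ 2)) a b.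
Proof.
  intros Hc. apply (ex_RInt_continuous (V := R_CompleteNormedModule)). intros v _.
  apply (ex_derive_continuous (fun v => exp (- lam * v) / sqrt (v ^ 2 + c ^ 2))).
  assert (0 < c ^ 2) by (apply pow_lt, Hc).
  auto_derive. repeat split; [nra | apply Rgt_not_eq, sqrt_lt_R0; nra].
Qed.

Lemma Mdiff_integrand_eq lam c v :
  Mdiff_integrand lam c v = exp (- lam * v) / sqrt (v ^ 2 + c ^ 2) - M_integrand lam v.
Proof. apply Rmult_minus_distr_l. Qed.

Lemma ex_RInt_Mdiff_integrand lam c a b : 0 < c -> ex_RInt (Mdiff_integrand lam c) a b.
Proof.
  intros Hc.
  apply (ex_RInt_ext (V := R_NormedModule)
    (fun v => exp (- lam * v) / sqrt (v ^ 2 + c ^ 2) - M_integrand lam v)).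
  { intros v _. symmetry. apply Mdiff_integrand_eq. }
  apply (ex_RInt_minus (V := R_NormedModule));
    [apply ex_RInt_exp_div_sqrt, Hc | apply ex_RInt_M_integrand].
Qed.

Lemma RInt_M_integrand_rescale lam c b : 0 < c ->
  RInt (M_integrand (lam * c)) 0 (b / c) =
  RInt (fun v => exp (- lam * v) / sqrt (v ^ 2 + c ^ 2)) 0 b.
Proof.
  intros Hc.
  assert (H := RInt_comp_lin (V := R_CompleteNormedModule)
    (fun v => exp (- lam * v) / sqrt (v ^ 2 + c ^ 2)) c 0 0 (b / c)
    (ex_RInt_exp_div_sqrt _ _ _ _ Hc)).
  replace (c * (b / c) + 0) with b in H by (field; lra).
  replace (c * 0 + 0) with 0 in H by ring.
  rewrite <- H. apply RInt_ext. intros u _.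
  unfold scal; simpl; unfold mult; simpl. unfold M_integrand.
  replace ((c * u + 0) * ((c * u + 0) * 1) + c * (c * 1)) with (c ^ 2 * (u ^ 2 + 1)) by ring.
  rewrite sqrt_mult_alt, sqrt_pow2 by (apply pow2_ge_0 || lra).
  replace (- lam * (c * u + 0)) with (- (lam * c) * u) by ring.
  assert (0 < sqrt (u ^ 2 + 1)) by (apply sqrt_lt_R0; nra).
  field. lra.
Qed.

Lemma RInt_Mdiff_integrand lam c b : 0 < c ->
  RInt (Mdiff_integrand lam c) 0 b =
  RInt (M_integrand (lam * c)) 0 (b / c) - RInt (M_integrand lam) 0 b.
Proof.
  intros Hc. rewrite RInt_M_integrand_rescale by exact Hc.
  rewrite (RInt_ext (V := R_CompleteNormedModule) _
    (fun v => exp (- lam * v) / sqrt (v ^ 2 + c ^ 2) - M_integrand lam v))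
    by (intros v _; apply Mdiff_integrand_eq).
  apply is_RInt_unique. apply (is_RInt_minus (V := R_NormedModule));
    apply (RInt_correct (V := R_CompleteNormedModule));
    [apply ex_RInt_exp_div_sqrt, Hc | apply ex_RInt_M_integrand].
Qed.

Lemma RInt_Mdiff_le_M lam c B : 0 < lam -> 0 < c -> c ^ 2 <= 1 -> 0 <= B ->
  RInt (Mdiff_integrand lam c) 0 B <= M (lam * c) - M lam.
Proof.
  intros Hlam Hc Hc1 HB.
  apply (le_lim_of_eventually_le (fun b => M (lam * c) - RInt (M_integrand lam) 0 b) _ _ B).
  - intros b Hb.
    assert (Hmono : RInt (Mdiff_integrand lam c) 0 B <= RInt (Mdiff_integrand lam c) 0 b).
    { rewrite <- (RInt_Chasles (Mdiff_integrand lam c) 0 B b)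
        by apply ex_RInt_Mdiff_integrand, Hc.
      assert (0 <= RInt (Mdiff_integrand lam c) B b).
      { apply RInt_ge_0; [exact Hb | apply ex_RInt_Mdiff_integrand, Hc |].
        intros v Hv. apply Rmult_le_pos; [left; apply exp_pos | apply gap_nonneg; lra]. }
      unfold plus; simpl. lra. }
    rewrite (RInt_Mdiff_integrand lam c b Hc) in Hmono.
    pose proof (RInt_M_integrand_le_M (lam * c) (b / c) (Rmult_lt_0_compat _ _ Hlam Hc)).
    lra.
  - apply is_lim_minus'; [apply is_lim_const | apply RInt_M_integrand_cvg, Hlam].
Qed.

Lemma RInt_Mdiff_tail_ge lam c Y : 0 < lam -> 0 < c -> c ^ 2 <= 1 -> 0 <= Y ->
  exp (- lam * (Y + 1)) * ((1 - c ^ 2) / (2 * (Y + 2) ^ 3)) <=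
  RInt (Mdiff_integrand lam c) Y (Y + 1).
Proof.
  intros Hlam Hc Hc1 HY.
  set (T := exp (- lam * (Y + 1)) * ((1 - c ^ 2) / (2 * (Y + 2) ^ 3))).
  replace T with (RInt (fun _ => T) Y (Y + 1))
    by (rewrite RInt_const; unfold scal; simpl; unfold mult; simpl; ring).
  apply RInt_le; [lra | apply ex_RInt_const | apply ex_RInt_Mdiff_integrand, Hc |].
  intros v Hv. unfold T, Mdiff_integrand.
  apply Rmult_le_compat.
  - left. apply exp_pos.
  - unfold Rdiv. apply Rmult_le_pos; [lra |].
    left. apply Rinv_0_lt_compat, Rmult_lt_0_compat; [lra | apply pow_lt; lra].
  - destruct (Req_dec v (Y + 1)) as [-> | Hne]; [lra |].
    left. apply exp_increasing. nra.
  - replace (Y + 2) with ((Y + 1) + 1) by ring.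
    apply Rle_trans with (gap c (Y + 1)); [apply gap_lower_bound; lra |].
    apply gap_antitone; lra.
Qed.

(** * Estimates along the contour *)

Lemma imag_axis_integral_le lam Y : 0 < lam -> 0 <= Y -> imag_axis_integral lam Y <= / lam.
Proof.
  intros Hlam HY. unfold imag_axis_integral.
  apply Rle_trans with (RInt (fun y => exp (- lam * y)) 0 Y).
  - apply RInt_le;
      [exact HY | apply ex_RInt_exp_div_cosh | eexists; apply is_RInt_exp_neg; lra |].
    intros y _. pose proof (cosh_ge_1 y). pose proof (exp_pos (- lam * y)).
    unfold Rdiv. rewrite <- (Rmult_1_r (exp (- lam * y))) at 2.
    apply Rmult_le_compat_l; [lra |]. rewrite <- Rinv_1. apply Rinv_le_contravar; lra.
  - apply Rle_trans with (exp (- lam * 0) / lam); [now apply RInt_exp_neg_le |].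
    rewrite Rmult_0_r, exp_0. lra.
Qed.

Lemma Cmod_top_edge_le lam x Y : 0 <= x < PI / 2 -> 0 < Y ->
  Cmod (CInt (fun t => expi_sec lam t Y) 0 x) <= x * (exp (- lam * Y) / sinh Y).
Proof.
  intros Hx HY. pose proof (sinh_pos Y HY) as Hs.
  destruct (ex_RInt_expi_sec_horizontal lam Y 0 x) as [Hre Him];
    [pose proof PI_RGT_0; lra | lra |].
  apply Rle_trans with (RInt (fun _ => exp (- lam * Y) / sinh Y) 0 x).
  - apply Cmod_RInt_le; [lra | exact Hre | exact Him | apply ex_RInt_const |].
    intros t Ht. rewrite Cmod_expi_sec by (apply cos_neq_0_strip; pose proof PI_RGT_0; lra).
    unfold Rdiv. apply Rmult_le_compat_l; [left; apply exp_pos |].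
    apply Rinv_le_contravar; [exact Hs |].
    rewrite <- (sqrt_pow2 (sinh Y)) at 1 by lra.
    apply sqrt_le_1_alt. pose proof (pow2_ge_0 (cos t)). lra.
  - rewrite RInt_const. unfold scal; simpl; unfold mult; simpl. lra.
Qed.

Lemma Cmod_side_edge_le lam x Y : 0 < x < PI / 2 -> 0 <= Y ->
  Cmod (CInt (fun y => expi_sec lam x y) 0 Y) <=
  imag_axis_integral lam Y + RInt (Mdiff_integrand lam (cos x)) 0 Y.
Proof.
  intros Hx HY.
  assert (Hc : 0 < cos x) by (apply cos_gt_0; lra).
  assert (Hc1 : cos x ^ 2 <= 1) by (pose proof (sin2_cos2 x); unfold Rsqr in *; nra).
  destruct (ex_RInt_expi_sec_vertical lam x 0 Y) as [Hre Him]; [lra |].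
  unfold imag_axis_integral.
  rewrite <- (RInt_plus (V := R_CompleteNormedModule)); [| apply ex_RInt_exp_div_cosh |
    apply ex_RInt_Mdiff_integrand, Hc].
  apply Cmod_RInt_le; [exact HY | exact Hre | exact Him | |].
  - apply (ex_RInt_plus (V := R_NormedModule));
      [apply ex_RInt_exp_div_cosh | apply ex_RInt_Mdiff_integrand, Hc].
  - intros y Hy. rewrite Cmod_expi_sec by lra. unfold Mdiff_integrand, plus; simpl.
    unfold Rdiv. rewrite <- Rmult_plus_distr_l.
    apply Rmult_le_compat_l; [left; apply exp_pos |].
    apply inv_sqrt_sinh_le; lra.
Qed.

Lemma Cmod_J_sub_le lam x Y : 0 < lam -> 0 < x < PI / 2 -> 0 < Y ->
  Cmod (Cminus (J lam x) (Ci * RtoC (/ lam))%C) <=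
  / lam + RInt (Mdiff_integrand lam (cos x)) 0 Y + x * (exp (- lam * Y) / sinh Y).
Proof.
  intros Hlam Hx HY.
  pose proof (Cmod_top_edge_le lam x Y ltac:(lra) HY) as Htop.
  pose proof (Cmod_side_edge_le lam x Y Hx ltac:(lra)) as Hside.
  pose proof (imag_axis_integral_le lam Y Hlam ltac:(lra)) as HI.
  rewrite (J_contour lam x Y) by lra.
  set (top := CInt (fun t => expi_sec lam t Y) 0 x) in *.
  set (side := CInt (fun y => expi_sec lam x y) 0 Y) in *.
  set (I := imag_axis_integral lam Y) in *.
  replace (Cminus (top + Ci * (RtoC I - side)) (Ci * RtoC (/ lam)))%C
    with (top + (RtoC (I - / lam) * Ci - side * Ci))%C
    by (unfold RtoC; apply injective_projections; simpl; ring).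
  eapply Rle_trans; [apply Cmod_triangle |].
  assert (Cmod (RtoC (I - / lam) * Ci - side * Ci) <= (/ lam - I) + Cmod side).
  { eapply Rle_trans; [apply Cmod_triangle |].
    rewrite Cmod_opp, !Cmod_mult, Cmod_R, Cmod_Ci, Rabs_left1 by lra. lra. }
  lra.
Qed.

Lemma exists_top_edge_lt_tail lam c x : 0 < lam -> 0 < c -> c ^ 2 < 1 -> 0 < x ->
  exists Y, 0 < Y /\ x * (exp (- lam * Y) / sinh Y) < RInt (Mdiff_integrand lam c) Y (Y + 1).
Proof.
  intros Hlam Hc Hc1 Hx.
  set (el := exp (- lam)). assert (Hel : 0 < el) by apply exp_pos.
  destruct (sinh_dominates_cubic (2 * x / (el * (1 - c ^ 2)))) as [Y [HY Hsinh]].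
  { apply Rdiv_lt_0_compat; [lra | apply Rmult_lt_0_compat; lra]. }
  exists Y. split; [exact HY |].
  eapply Rlt_le_trans; [| apply RInt_Mdiff_tail_ge; lra].
  pose proof (sinh_pos Y HY) as Hs.
  assert (Hcube : 0 < (Y + 2) ^ 3) by (apply pow_lt; lra).
  set (e := exp (- lam * Y)). assert (He : 0 < e) by apply exp_pos.
  replace (exp (- lam * (Y + 1))) with (e * el)
    by (unfold e, el; rewrite <- exp_plus; f_equal; ring).
  assert (Hkey : 2 * x * (Y + 2) ^ 3 < el * (1 - c ^ 2) * sinh Y).
  { apply (Rmult_lt_compat_l (el * (1 - c ^ 2))) in Hsinh; [| nra].
    replace (el * (1 - c ^ 2) * (2 * x / (el * (1 - c ^ 2)) * (Y + 2) ^ 3))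
      with (2 * x * (Y + 2) ^ 3) in Hsinh by (field; nra).
    lra. }
  replace (x * (e / sinh Y)) with (e / (2 * (Y + 2) ^ 3 * sinh Y) * (2 * x * (Y + 2) ^ 3))
    by (field; lra).
  replace (e * el * ((1 - c ^ 2) / (2 * (Y + 2) ^ 3)))
    with (e / (2 * (Y + 2) ^ 3 * sinh Y) * (el * (1 - c ^ 2) * sinh Y)) by (field; lra).
  apply Rmult_lt_compat_l; [apply Rdiv_lt_0_compat; nra | exact Hkey].
Qed.

Theorem theorem5 (lam x : R) (Hlam : 0 < lam) (Hx0 : 0 < x) (Hx1 : x < PI / 2) :
  Cmod (Cminus (J lam x) (Ci * RtoC (/ lam))%C) < / lam - M lam + M (lam * cos x).
Proof.
  assert (Hc : 0 < cos x) by (apply cos_gt_0; lra).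
  assert (Hc1 : cos x ^ 2 < 1).
  { pose proof (sin_gt_0 x Hx0 ltac:(lra)). pose proof (sin2_cos2 x). unfold Rsqr in *. nra. }
  destruct (exists_top_edge_lt_tail lam (cos x) x Hlam Hc Hc1 Hx0) as [Y [HY Htail]].
  pose proof (Cmod_J_sub_le lam x Y Hlam (conj Hx0 Hx1) HY) as HJ.
  pose proof (RInt_Mdiff_le_M lam (cos x) (Y + 1) Hlam Hc ltac:(lra) ltac:(lra)) as HM.
  rewrite <- (RInt_Chasles _ 0 Y (Y + 1)) in HM by apply ex_RInt_Mdiff_integrand, Hc.
  unfold plus in HM; simpl in HM. lra.
Qed.
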